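(* Let $(c,d,r,a,b)\in E$, and let $(\varphi,\psi)\in C^2(\mathbb{R},[0,1]^2)$ be a traveling wave profile of system (S) with speed $c$ connecting $(1,0)$ to $(0,1)$. Then $(\varphi,\psi)$ is componentwise strictly monotonic: for all $\xi_1<\xi_2$, $\varphi(\xi_1)>\varphi(\xi_2)$ and $\psi(\xi_1)<\psi(\xi_2)$.
   Context: Parameters $(d,r,a,b)\in\Pi:=(0,+\infty)^2\times(0,1)\times(1,+\infty)$. System (S): $\partial_tu-\partial_{xx}u=u(1-u-av)$, $\partial_tv-d\partial_{xx}v=rv(1-v-bu)$. A traveling wave profile with speed $c$ connecting $(1,0)$ to $(0,1)$ is $(\varphi,\psi)\in C^2(\mathbb{R},[0,1]^2)$ with $-\varphi''-c\varphi'=\varphi(1-\varphi-a\psi)$, $-d\psi''-c\psi'=r\psi(1-\psi-b\varphi)$, $(\varphi,\psi)(-\infty)=(1,0)$, $(\varphi,\psi)(+\infty)=(0,1)$. $c^{d,r,a,b}_{LLW}$ is the minimal speed of (componentwise monotone) such profiles (the Lewis–Li–Weinberger spreading speed), and $E=\{(c,d,r,a,b):(d,r,a,b)\in\Pi,\ c\ge c^{d,r,a,b}_{LLW}\}$. *)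

From Stdlib Require Import Reals.
Open Scope R_scope.

Definition lim_pinf (f : R -> R) (l : R) : Prop :=
  forall eps, 0 < eps -> exists M, forall x, M <= x -> Rabs (f x - l) < eps.

Definition lim_minf (f : R -> R) (l : R) : Prop :=
  forall eps, 0 < eps -> exists M, forall x, x <= M -> Rabs (f x - l) < eps.

Definition C2_with (f f1 f2 : R -> R) : Prop :=
  (forall x, derivable_pt_lim f x (f1 x)) /\
  (forall x, derivable_pt_lim f1 x (f2 x)) /\
  continuity f2.

Definition in_Pi (d r a b : R) : Prop :=
  0 < d /\ 0 < r /\ 0 < a < 1 /\ 1 < b.

Definition tw_profile (c d r a b : R) (phi psi : R -> R) : Prop :=
  (forall x, 0 <= phi x <= 1 /\ 0 <= psi x <= 1) /\
  exists phi1 phi2 psi1 psi2 : R -> R,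
    C2_with phi phi1 phi2 /\ C2_with psi psi1 psi2 /\
    (forall x, - phi2 x - c * phi1 x = phi x * (1 - phi x - a * psi x)) /\
    (forall x, - d * psi2 x - c * psi1 x = r * psi x * (1 - psi x - b * phi x)) /\
    lim_minf phi 1 /\ lim_minf psi 0 /\
    lim_pinf phi 0 /\ lim_pinf psi 1.

Definition monotone_tw_profile (c d r a b : R) (phi psi : R -> R) : Prop :=
  tw_profile c d r a b phi psi /\
  (forall x y, x <= y -> phi y <= phi x /\ psi x <= psi y).

Definition is_c_LLW (d r a b m : R) : Prop :=
  (exists phi psi, monotone_tw_profile m d r a b phi psi) /\
  (forall c phi psi, monotone_tw_profile c d r a b phi psi -> m <= c).

Definition in_E (c d r a b : R) : Prop :=
  in_Pi d r a b /\ exists m, is_c_LLW d r a b m /\ m <= c.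

From Stdlib Require Import Reals Lra Psatz Classical.
Open Scope R_scope.

(* Sliding method.  Compare the profile with its shift by t > 0, i.e. ask for
   phi(x+t) <= phi x and psi x <= psi(x+t) for all x.  For large t this holds on a
   compact window by the limits at +-oo, and outside the window by the eventual
   monotonicity of the tails combined with a maximum principle for the equations
   satisfied by the differences.  Decreasing t, the set of admissible shifts is
   closed, and it is open at every t > 0: there the comparison is strict, because
   a touching point gives zero Cauchy data to the differences, which solve a linear
   ODE system with bounded coefficients; they would then vanish identically and
   phi would be t-periodic.  Only (d,r,a,b) in Pi is used. *)

Lemma derivable_pt_lim_continuity_pt f x l :
  derivable_pt_lim f x l -> continuity_pt f x.
Proof. intro H. exact (derivable_continuous_pt f x (exist _ l H)). Qed.

Lemma derivable_pt_lim_shift f f1 t x :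
  (forall y, derivable_pt_lim f y (f1 y)) ->
  derivable_pt_lim (fun y => f (y + t)) x (f1 (x + t)).
Proof.
  intro Hf.
  assert (Hlin : derivable_pt_lim (fun y => y + t) x 1).
  { rewrite <- (Rplus_0_r 1).
    apply (derivable_pt_lim_plus id (fct_cte t));
      [apply derivable_pt_lim_id | apply derivable_pt_lim_const]. }
  rewrite <- (Rmult_1_r (f1 (x + t))).
  exact (derivable_pt_lim_comp (fun y => y + t) f x 1 _ Hlin (Hf (x + t))).
Qed.

Lemma derivable_pt_lim_exp_weight (E E' : R -> R) K x :
  derivable_pt_lim E x (E' x) ->
  derivable_pt_lim (fun y => E y * exp (K * y)) x
    ((E' x + K * E x) * exp (K * x)).
Proof.
  intro HE.
  assert (Hlin : derivable_pt_lim (fun y => K * y) x K).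
  { pose proof (derivable_pt_lim_scal id K x 1 (derivable_pt_lim_id x)) as H.
    rewrite Rmult_1_r in H. exact H. }
  assert (Hexp : derivable_pt_lim (fun y => exp (K * y)) x (exp (K * x) * K))
    by exact (derivable_pt_lim_comp (fun y => K * y) exp x K _ Hlin
                (derivable_pt_lim_exp (K * x))).
  replace ((E' x + K * E x) * exp (K * x))
    with (E' x * exp (K * x) + E x * (exp (K * x) * K)) by ring.
  exact (derivable_pt_lim_mult E (fun y => exp (K * y)) x _ _ HE Hexp).
Qed.

Lemma right_limit_le f x0 k :
  continuity_pt f x0 -> (forall y, x0 < y -> f y <= k) -> f x0 <= k.
Proof.
  intros Hc Hright.
  destruct (Rle_or_lt (f x0) k) as [|Hgt]; [assumption | exfalso].
  destruct (Hc (f x0 - k)) as [al [Hal Hnear]]; [lra |].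
  assert (Hq : Rabs (f (x0 + al / 2) - f x0) < f x0 - k).
  { apply Hnear. split.
    - split; [exact I | lra].
    - simpl; unfold R_dist. replace (x0 + al / 2 - x0) with (al / 2) by ring.
      rewrite Rabs_right; lra. }
  apply Rabs_def2 in Hq. specialize (Hright (x0 + al / 2)). lra.
Qed.

Lemma right_limit_ge f x0 k :
  continuity_pt f x0 -> (forall y, x0 < y -> k <= f y) -> k <= f x0.
Proof.
  intros Hc Hright.
  enough (- f x0 <= - k) by lra.
  apply (right_limit_le (- f)%F); [now apply continuity_pt_opp |].
  intros y Hy. unfold opp_fct. specialize (Hright y Hy). lra.
Qed.

Lemma local_max_second_order f f1 L x0 a b :
  a < x0 < b -> (forall x, a < x < b -> f x <= f x0) ->
  (forall x, derivable_pt_lim f x (f1 x)) -> derivable_pt_lim f1 x0 L ->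
  f1 x0 = 0 /\ L <= 0.
Proof.
  intros Hx0 Hmax Hf HL.
  assert (Hcrit : f1 x0 = 0).
  { rewrite <- (derive_pt_eq_0 f x0 (f1 x0) (exist _ (f1 x0) (Hf x0)) (Hf x0)).
    apply (deriv_maximum f a b); try lra. intros x Hax Hxb. apply Hmax; lra. }
  split; [exact Hcrit |].
  destruct (Rle_or_lt L 0) as [|HLpos]; [assumption | exfalso].
  (* f1 is positive just right of x0, so f increases there. *)
  destruct (HL L HLpos) as [[del Hdel] Hnear]; simpl in Hnear.
  assert (Hh : exists h, 0 < h /\ h < del /\ x0 + h < b).
  { exists (Rmin (del / 2) ((b - x0) / 2)).
    pose proof (Rmin_l (del / 2) ((b - x0) / 2)).
    pose proof (Rmin_r (del / 2) ((b - x0) / 2)).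
    assert (0 < Rmin (del / 2) ((b - x0) / 2)) by (apply Rmin_glb_lt; lra).
    lra. }
  destruct Hh as [h Hh].
  destruct (MVT_cor2 f f1 x0 (x0 + h)) as [y [Hmvt Hy]]; [lra | intros; apply Hf |].
  assert (Hq : Rabs ((f1 (x0 + (y - x0)) - f1 x0) / (y - x0) - L) < L).
  { apply Hnear; [lra | rewrite Rabs_right; lra]. }
  replace (x0 + (y - x0)) with y in Hq by ring.
  rewrite Hcrit, Rminus_0_r in Hq. apply Rabs_def2 in Hq.
  assert (Hf1y : 0 < f1 y).
  { replace (f1 y) with (f1 y / (y - x0) * (y - x0)) by (field; lra).
    apply Rmult_lt_0_compat; lra. }
  assert (f (x0 + h) <= f x0) by (apply Hmax; lra).
  nra.
Qed.

Lemma local_min_second_order f f1 L x0 a b :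
  a < x0 < b -> (forall x, a < x < b -> f x0 <= f x) ->
  (forall x, derivable_pt_lim f x (f1 x)) -> derivable_pt_lim f1 x0 L ->
  f1 x0 = 0 /\ 0 <= L.
Proof.
  intros Hx0 Hmin Hf HL.
  destruct (local_max_second_order (- f)%F (- f1)%F (- L) x0 a b) as [H1 H2].
  - exact Hx0.
  - intros x Hx. unfold opp_fct. specialize (Hmin x Hx). lra.
  - intro x. apply derivable_pt_lim_opp, Hf.
  - apply derivable_pt_lim_opp, HL.
  - unfold opp_fct in H1. split; lra.
Qed.

Lemma interior_max_point (g g1 g2 : R -> R) u x1 v :
  (forall x, derivable_pt_lim g x (g1 x)) ->
  (forall x, derivable_pt_lim g1 x (g2 x)) ->
  u < x1 < v -> g u < g x1 -> g v < g x1 ->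
  exists x0, u < x0 < v /\ g x1 <= g x0 /\ g1 x0 = 0 /\ g2 x0 <= 0.
Proof.
  intros Hg Hg1 Hx1 Hu Hv.
  destruct (continuity_ab_maj g u v) as [x0 [Hmax Hx0]]; [lra | |].
  { intros x _. exact (derivable_pt_lim_continuity_pt g x _ (Hg x)). }
  assert (Hx1x0 : g x1 <= g x0) by (apply Hmax; lra).
  assert (Hint : u < x0 < v).
  { destruct Hx0 as [[Hux0 | Hux0] [Hx0v | Hx0v]]; subst; split; lra. }
  destruct (local_max_second_order g g1 (g2 x0) x0 u v) as [Hcrit Hconc]; auto.
  intros x Hx. apply Hmax. lra.
  exists x0. auto.
Qed.

Lemma interior_min_point (g g1 g2 : R -> R) u x1 v :
  (forall x, derivable_pt_lim g x (g1 x)) ->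
  (forall x, derivable_pt_lim g1 x (g2 x)) ->
  u < x1 < v -> g x1 < g u -> g x1 < g v ->
  exists x0, u < x0 < v /\ g x0 <= g x1 /\ g1 x0 = 0 /\ 0 <= g2 x0.
Proof.
  intros Hg Hg1 Hx1 Hu Hv.
  destruct (interior_max_point (- g)%F (- g1)%F (- g2)%F u x1 v)
    as [x0 [Hx0 [Hle [Hcrit Hconc]]]]; unfold opp_fct in *.
  - intro x. apply derivable_pt_lim_opp, Hg.
  - intro x. apply derivable_pt_lim_opp, Hg1.
  - exact Hx1.
  - lra.
  - lra.
  - exists x0. repeat split; lra.
Qed.

Lemma Rabs_le_inv x m : Rabs x <= m -> - m <= x <= m.
Proof.
  intro H. pose proof (Rle_abs x) as H1. pose proof (Rle_abs (- x)) as H2.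
  rewrite Rabs_Ropp in H2. lra.
Qed.

Lemma Rabs_lin_comb2_le al be p q M :
  Rabs al <= M -> Rabs be <= M -> Rabs (al * p + be * q) <= M * (Rabs p + Rabs q).
Proof.
  intros Hal Hbe. eapply Rle_trans; [apply Rabs_triang |].
  rewrite !Rabs_mult, Rmult_plus_distr_l.
  apply Rplus_le_compat; apply Rmult_le_compat_r; auto using Rabs_pos.
Qed.

Lemma Rabs_lin_comb4_le al be ga de p q u v M :
  Rabs al <= M -> Rabs be <= M -> Rabs ga <= M -> Rabs de <= M ->
  Rabs (al * p + be * q + ga * u + de * v) <= M * (Rabs p + Rabs q + Rabs u + Rabs v).
Proof.
  intros Hal Hbe Hga Hde.
  replace (al * p + be * q + ga * u + de * v) with ((al * p + be * q) + (ga * u + de * v))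
    by ring.
  eapply Rle_trans; [apply Rabs_triang |].
  replace (M * (Rabs p + Rabs q + Rabs u + Rabs v))
    with (M * (Rabs p + Rabs q) + M * (Rabs u + Rabs v)) by ring.
  apply Rplus_le_compat; apply Rabs_lin_comb2_le; assumption.
Qed.

Lemma Rabs_le_div_pos d y B : 0 < d -> Rabs (d * y) <= B -> Rabs y <= B / d.
Proof.
  intros Hd H. rewrite Rabs_mult, (Rabs_right d) in H by lra.
  apply (Rmult_le_reg_l d); [lra |]. replace (d * (B / d)) with B by (field; lra). exact H.
Qed.

Lemma lim_pinf_lt f l e : lim_pinf f l -> l < e -> exists M, forall x, M <= x -> f x < e.
Proof.
  intros Hf He. destruct (Hf (e - l)) as [M HM]; [lra |].
  exists M. intros x Hx. pose proof (Rabs_def2 _ _ (HM x Hx)). lra.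
Qed.

Lemma lim_pinf_gt f l e : lim_pinf f l -> e < l -> exists M, forall x, M <= x -> e < f x.
Proof.
  intros Hf He. destruct (Hf (l - e)) as [M HM]; [lra |].
  exists M. intros x Hx. pose proof (Rabs_def2 _ _ (HM x Hx)). lra.
Qed.

Lemma lim_minf_lt f l e : lim_minf f l -> l < e -> exists M, forall x, x <= M -> f x < e.
Proof.
  intros Hf He. destruct (Hf (e - l)) as [M HM]; [lra |].
  exists M. intros x Hx. pose proof (Rabs_def2 _ _ (HM x Hx)). lra.
Qed.

Lemma lim_minf_gt f l e : lim_minf f l -> e < l -> exists M, forall x, x <= M -> e < f x.
Proof.
  intros Hf He. destruct (Hf (l - e)) as [M HM]; [lra |].
  exists M. intros x Hx. pose proof (Rabs_def2 _ _ (HM x Hx)). lra.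
Qed.

Lemma not_periodic f t :
  0 < t -> (forall x, f (x + t) = f x) -> lim_minf f 1 -> lim_pinf f 0 -> False.
Proof.
  intros Ht Hper Hminf Hpinf.
  assert (Hiter : forall n x, f (x + INR n * t) = f x).
  { induction n as [| n IH]; intro x.
    - simpl. now rewrite Rmult_0_l, Rplus_0_r.
    - rewrite S_INR. replace (x + (INR n + 1) * t) with (x + INR n * t + t) by ring.
      now rewrite Hper. }
  destruct (lim_minf_gt f 1 (1 / 2) Hminf) as [M1 HM1]; [lra |].
  destruct (lim_pinf_lt f 0 (1 / 2) Hpinf) as [M2 HM2]; [lra |].
  destruct (INR_unbounded ((M2 - M1) / t)) as [n Hn].
  assert (M2 - M1 < INR n * t).
  { replace (M2 - M1) with ((M2 - M1) / t * t) by (field; lra).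
    apply Rmult_lt_compat_r; lra. }
  specialize (HM1 M1 (Rle_refl _)). specialize (HM2 (M1 + INR n * t)).
  rewrite Hiter in HM2. specialize (HM2 ltac:(lra)). lra.
Qed.

Lemma positive_min_on_segment g u v :
  u <= v -> (forall y, u <= y <= v -> continuity_pt g y) ->
  (forall y, u <= y <= v -> 0 < g y) ->
  exists e, 0 < e /\ forall y, u <= y <= v -> e <= g y.
Proof.
  intros Huv Hc Hpos.
  destruct (continuity_ab_min g u v Huv Hc) as [m [Hm Hmuv]].
  exists (g m). split; [apply Hpos |]; assumption.
Qed.

Lemma lipschitz_on_segment f f1 u v :
  (forall y, derivable_pt_lim f y (f1 y)) -> (forall y, continuity_pt f1 y) ->
  u <= v -> exists L, 0 <= L /\
    forall x y, u <= x -> x <= y -> y <= v -> Rabs (f y - f x) <= L * (y - x).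
Proof.
  intros Hf Hf1 Huv.
  destruct (continuity_ab_maj (fun y => Rabs (f1 y)) u v Huv) as [m [Hm _]].
  { intros y _. apply (continuity_pt_comp f1 Rabs); [apply Hf1 | apply Rcontinuity_abs]. }
  exists (Rabs (f1 m)). split; [apply Rabs_pos |].
  intros x y Hux Hxy Hyv. destruct Hxy as [Hxy | <-].
  - destruct (MVT_cor2 f f1 x y Hxy) as [z [Hmvt Hz]]; [intros; apply Hf |].
    rewrite Hmvt, Rabs_mult, (Rabs_right (y - x)) by lra.
    apply Rmult_le_compat_r; [lra | apply (Hm z); lra].
  - rewrite !Rminus_diag, Rabs_R0, Rmult_0_r. lra.
Qed.

Lemma gronwall_zero (E E' : R -> R) K x0 :
  (forall x, derivable_pt_lim E x (E' x)) -> (forall x, 0 <= E x) ->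
  (forall x, Rabs (E' x) <= K * E x) -> E x0 = 0 -> forall x, E x = 0.
Proof.
  intros HE Hpos Hgrowth H0 x.
  (* E e^{Kx} is nondecreasing and E e^{-Kx} is nonincreasing. *)
  enough (E x <= 0) by (specialize (Hpos x); lra).
  destruct (Rtotal_order x x0) as [Hx | [-> | Hx]]; [| lra |].
  - destruct (MVT_cor2 (fun y => E y * exp (K * y))
      (fun y => (E' y + K * E y) * exp (K * y)) x x0 Hx) as [y [Hmvt _]].
    { intros; now apply derivable_pt_lim_exp_weight. }
    rewrite H0, Rmult_0_l in Hmvt.
    pose proof (Rabs_le_inv _ _ (Hgrowth y)). pose proof (exp_pos (K * y)).
    assert (0 <= (E' y + K * E y) * exp (K * y) * (x0 - x))
      by (repeat apply Rmult_le_pos; lra).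
    pose proof (exp_pos (K * x)). nra.
  - destruct (MVT_cor2 (fun y => E y * exp (- K * y))
      (fun y => (E' y + - K * E y) * exp (- K * y)) x0 x Hx) as [y [Hmvt _]].
    { intros; now apply derivable_pt_lim_exp_weight. }
    rewrite H0, Rmult_0_l in Hmvt.
    pose proof (Rabs_le_inv _ _ (Hgrowth y)). pose proof (exp_pos (- K * y)).
    assert (0 <= - (E' y + - K * E y) * exp (- K * y) * (x - x0))
      by (repeat apply Rmult_le_pos; lra).
    pose proof (exp_pos (- K * x)). nra.
Qed.

Lemma energy_derivative_bound p q u v f g M1 M2 :
  0 <= M1 -> 0 <= M2 ->
  Rabs f <= M1 * (Rabs p + Rabs q + Rabs u + Rabs v) ->
  Rabs g <= M2 * (Rabs p + Rabs q + Rabs u + Rabs v) ->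
  Rabs (2 * (p * q + q * f + u * v + v * g))
    <= (2 + 5 * M1 + 5 * M2) * (p * p + q * q + u * u + v * v).
Proof.
  intros HM1 HM2 Hf Hg.
  assert (Habs : Rabs (2 * (p * q + q * f + u * v + v * g))
      <= 2 * (Rabs p * Rabs q + Rabs q * Rabs f + Rabs u * Rabs v + Rabs v * Rabs g)).
  { rewrite Rabs_mult, (Rabs_right 2) by lra. rewrite <- !Rabs_mult.
    apply Rmult_le_compat_l; [lra |].
    repeat (eapply Rle_trans; [apply Rabs_triang | apply Rplus_le_compat_r]).
    lra. }
  assert (Hsq : forall y, y * y = Rabs y * Rabs y)
    by (intro y; rewrite <- Rabs_mult, Rabs_right; nra).
  rewrite (Hsq p), (Hsq q), (Hsq u), (Hsq v).
  pose proof (Rabs_pos p). pose proof (Rabs_pos q).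
  pose proof (Rabs_pos u). pose proof (Rabs_pos v).
  (* The cross terms are absorbed through 2 |y| |z| <= y^2 + z^2. *)
  assert (0 <= Rabs q * (M1 * (Rabs p + Rabs q + Rabs u + Rabs v) - Rabs f))
    by (apply Rmult_le_pos; lra).
  assert (0 <= Rabs v * (M2 * (Rabs p + Rabs q + Rabs u + Rabs v) - Rabs g))
    by (apply Rmult_le_pos; lra).
  assert (0 <= M1 * ((Rabs q - Rabs p) ^ 2 + (Rabs q - Rabs u) ^ 2 + (Rabs q - Rabs v) ^ 2))
    by (apply Rmult_le_pos;
        [lra | repeat apply Rplus_le_le_0_compat; apply pow2_ge_0]).
  assert (0 <= M2 * ((Rabs v - Rabs p) ^ 2 + (Rabs v - Rabs q) ^ 2 + (Rabs v - Rabs u) ^ 2))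
    by (apply Rmult_le_pos;
        [lra | repeat apply Rplus_le_le_0_compat; apply pow2_ge_0]).
  assert (0 <= (Rabs p - Rabs q) ^ 2 + (Rabs u - Rabs v) ^ 2)
    by (apply Rplus_le_le_0_compat; apply pow2_ge_0).
  nra.
Qed.

Lemma linear_system_zero (z1 z1' z1'' z2 z2' z2'' : R -> R) M1 M2 x0 :
  0 <= M1 -> 0 <= M2 ->
  (forall x, derivable_pt_lim z1 x (z1' x)) -> (forall x, derivable_pt_lim z1' x (z1'' x)) ->
  (forall x, derivable_pt_lim z2 x (z2' x)) -> (forall x, derivable_pt_lim z2' x (z2'' x)) ->
  (forall x, Rabs (z1'' x) <= M1 * (Rabs (z1 x) + Rabs (z1' x) + Rabs (z2 x) + Rabs (z2' x))) ->
  (forall x, Rabs (z2'' x) <= M2 * (Rabs (z1 x) + Rabs (z1' x) + Rabs (z2 x) + Rabs (z2' x))) ->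
  z1 x0 = 0 -> z1' x0 = 0 -> z2 x0 = 0 -> z2' x0 = 0 ->
  forall x, z1 x = 0 /\ z2 x = 0.
Proof.
  intros HM1 HM2 D1 D1' D2 D2' B1 B2 e1 e1' e2 e2'.
  set (E := fun x => z1 x * z1 x + z1' x * z1' x + z2 x * z2 x + z2' x * z2' x).
  assert (HE : forall x, derivable_pt_lim E x
      (2 * (z1 x * z1' x + z1' x * z1'' x + z2 x * z2' x + z2' x * z2'' x))).
  { intro x.
    replace (2 * (z1 x * z1' x + z1' x * z1'' x + z2 x * z2' x + z2' x * z2'' x))
      with ((z1' x * z1 x + z1 x * z1' x) + (z1'' x * z1' x + z1' x * z1'' x)
            + (z2' x * z2 x + z2 x * z2' x) + (z2'' x * z2' x + z2' x * z2'' x)) by ring.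
    repeat apply derivable_pt_lim_plus; apply derivable_pt_lim_mult; auto. }
  assert (HEpos : forall x, 0 <= E x).
  { intro x. unfold E. pose proof (Rle_0_sqr (z1 x)). pose proof (Rle_0_sqr (z1' x)).
    pose proof (Rle_0_sqr (z2 x)). pose proof (Rle_0_sqr (z2' x)). unfold Rsqr in *. lra. }
  assert (HEzero : forall x, E x = 0).
  { apply (gronwall_zero E _ (2 + 5 * M1 + 5 * M2) x0 HE HEpos).
    - intro x. apply energy_derivative_bound; auto.
    - unfold E. rewrite e1, e1', e2, e2'. ring. }
  intro x. specialize (HEzero x). unfold E in HEzero.
  pose proof (Rle_0_sqr (z1 x)). pose proof (Rle_0_sqr (z1' x)).
  pose proof (Rle_0_sqr (z2 x)). pose proof (Rle_0_sqr (z2' x)). unfold Rsqr in *.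
  split; nra.
Qed.

Lemma strong_minimum_principle (f f1 f2 : R -> R) M x0 :
  0 <= M ->
  (forall x, derivable_pt_lim f x (f1 x)) -> (forall x, derivable_pt_lim f1 x (f2 x)) ->
  (forall x, Rabs (f2 x) <= M * (Rabs (f x) + Rabs (f1 x))) ->
  (forall x, 0 <= f x) -> f x0 = 0 -> forall x, f x = 0.
Proof.
  intros HM Df Df1 Bf Hpos H0.
  assert (Hcrit : f1 x0 = 0).
  { apply (local_min_second_order f f1 (f2 x0) x0 (x0 - 1) (x0 + 1)); auto; [lra |].
    intros x _. rewrite H0. apply Hpos. }
  assert (Dzero : forall x, derivable_pt_lim (fun _ => 0) x 0)
    by (intro; apply derivable_pt_lim_const).
  intro x. refine (proj1 (linear_system_zero f f1 f2 (fun _ => 0) (fun _ => 0) (fun _ => 0)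
    M 0 x0 HM (Rle_refl 0) Df Df1 Dzero Dzero _ _ H0 Hcrit eq_refl eq_refl x)).
  - intro y. rewrite Rabs_R0, !Rplus_0_r. apply Bf.
  - intro y. rewrite Rabs_R0, Rmult_0_l. lra.
Qed.

Lemma logistic_difference_pos p q k w w' :
  0 <= p -> p < q -> 1 < p + q -> 0 <= k -> 0 <= w' <= w ->
  0 < p * (1 - p - k * w') - q * (1 - q - k * w).
Proof.
  intros Hp Hpq Hsum Hk Hw.
  replace (p * (1 - p - k * w') - q * (1 - q - k * w))
    with ((q - p) * (p + q - 1) + k * (q * w - p * w')) by ring.
  assert (0 <= q * w - p * w') by nra.
  assert (0 < (q - p) * (p + q - 1)) by (apply Rmult_lt_0_compat; lra).
  nra.
Qed.

Definition shift_gap (f : R -> R) (t x : R) : R := f (x + t) - f x.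

Lemma shift_gap_derivable f f1 t :
  (forall y, derivable_pt_lim f y (f1 y)) ->
  forall x, derivable_pt_lim (shift_gap f t) x (shift_gap f1 t x).
Proof.
  intros Hf x. apply (derivable_pt_lim_minus (fun y => f (y + t)) f).
  - now apply derivable_pt_lim_shift.
  - apply Hf.
Qed.

Lemma small_positive_step t0 L1 L2 e1 e2 :
  0 < t0 -> 0 <= L1 -> 0 <= L2 -> 0 < e1 -> 0 < e2 ->
  exists eps, 0 < eps /\ eps <= t0 /\ L1 * eps <= e1 /\ L2 * eps <= e2.
Proof.
  intros Ht0 HL1 HL2 He1 He2.
  assert (Hq1 : 0 < e1 / (L1 + 1)) by (apply Rdiv_lt_0_compat; lra).
  assert (Hq2 : 0 < e2 / (L2 + 1)) by (apply Rdiv_lt_0_compat; lra).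
  exists (Rmin t0 (Rmin (e1 / (L1 + 1)) (e2 / (L2 + 1)))).
  pose proof (Rmin_l t0 (Rmin (e1 / (L1 + 1)) (e2 / (L2 + 1)))).
  pose proof (Rmin_r t0 (Rmin (e1 / (L1 + 1)) (e2 / (L2 + 1)))).
  pose proof (Rmin_l (e1 / (L1 + 1)) (e2 / (L2 + 1))).
  pose proof (Rmin_r (e1 / (L1 + 1)) (e2 / (L2 + 1))).
  set (eps := Rmin t0 (Rmin (e1 / (L1 + 1)) (e2 / (L2 + 1)))) in *.
  assert (Heps : 0 < eps) by (apply Rmin_glb_lt; [| apply Rmin_glb_lt]; lra).
  assert (E1 : (L1 + 1) * (e1 / (L1 + 1)) = e1) by (field; lra).
  assert (E2 : (L2 + 1) * (e2 / (L2 + 1)) = e2) by (field; lra).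
  repeat split; [lra | lra | nra | nra].
Qed.

Lemma downward_induction (P : R -> Prop) T :
  (forall t, T <= t -> P t) ->
  (forall t0, 0 < t0 -> (forall s, t0 < s -> P s) ->
     exists eps, 0 < eps /\ forall s, t0 - eps < s -> P s) ->
  forall t, 0 < t -> P t.
Proof.
  intros Hlarge Hstep.
  (* ts = inf { t >= 0 | P holds on (t, +oo) }, computed as minus a supremum. *)
  set (A := fun y => 0 <= - y /\ forall s, - y < s -> P s).
  destruct (completeness A) as [L [Hub Hlub]].
  { exists 0. intros y [Hy _]. lra. }
  { exists (- Rmax 0 T). split; rewrite Ropp_involutive; [apply Rmax_l |].
    intros s Hs. apply Hlarge. pose proof (Rmax_r 0 T). lra. }
  assert (HL0 : L <= 0) by (apply Hlub; intros y [Hy _]; lra).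
  assert (Habove : forall s, - L < s -> P s).
  { intros s Hs. apply NNPP. intro HPs.
    assert (L <= - s); [| lra].
    apply Hlub. intros y [Hy HPy]. destruct (Rle_or_lt y (- s)) as [| Hys]; [assumption |].
    exfalso. apply HPs, HPy. lra. }
  destruct (Req_dec L 0) as [-> | HLneg].
  - intros t Ht. apply Habove. lra.
  - exfalso. destruct (Hstep (- L) ltac:(lra) Habove) as [eps [Heps Hnear]].
    assert (HA : A (- Rmax 0 (- L - eps / 2))).
    { split; rewrite Ropp_involutive; [apply Rmax_l |].
      intros s Hs. apply Hnear. pose proof (Rmax_r 0 (- L - eps / 2)). lra. }
    pose proof (Hub _ HA).
    assert (Rmax 0 (- L - eps / 2) < - L) by (apply Rmax_lub_lt; lra).
    lra.
Qed.

Section TravelingWave.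

Variables c d r a b : R.
Variables phi phi1 phi2 psi psi1 psi2 : R -> R.

Hypothesis d_pos : 0 < d.
Hypothesis r_pos : 0 < r.
Hypothesis a_pos : 0 < a.
Hypothesis a_lt_1 : a < 1.
Hypothesis b_gt_1 : 1 < b.
Hypothesis phi_range : forall x, 0 <= phi x <= 1.
Hypothesis psi_range : forall x, 0 <= psi x <= 1.
Hypothesis phi_d1 : forall x, derivable_pt_lim phi x (phi1 x).
Hypothesis phi_d2 : forall x, derivable_pt_lim phi1 x (phi2 x).
Hypothesis psi_d1 : forall x, derivable_pt_lim psi x (psi1 x).
Hypothesis psi_d2 : forall x, derivable_pt_lim psi1 x (psi2 x).
Hypothesis phi_eq : forall x, - phi2 x - c * phi1 x = phi x * (1 - phi x - a * psi x).
Hypothesis psi_eq : forall x,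
  - d * psi2 x - c * psi1 x = r * psi x * (1 - psi x - b * phi x).
Hypothesis phi_minf : lim_minf phi 1.
Hypothesis psi_minf : lim_minf psi 0.
Hypothesis phi_pinf : lim_pinf phi 0.
Hypothesis psi_pinf : lim_pinf psi 1.

Lemma phi_pos x : 0 < phi x.
Proof.
  destruct (phi_range x) as [[Hpos | Hzero] _]; [assumption | exfalso].
  assert (Hnull : forall y, phi y = 0).
  { apply (strong_minimum_principle phi phi1 phi2 (Rabs c + 1) x); auto.
    - pose proof (Rabs_pos c). lra.
    - intro y. replace (phi2 y) with ((- (1 - phi y - a * psi y)) * phi y + (- c) * phi1 y)
        by (pose proof (phi_eq y); lra).
      apply Rabs_lin_comb2_le.
      + apply Rabs_le. destruct (phi_range y), (psi_range y). pose proof (Rabs_pos c). nra.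
      + rewrite Rabs_Ropp. lra.
    - intro y. apply phi_range. }
  destruct (lim_minf_gt phi 1 0 phi_minf) as [M HM]; [lra |].
  specialize (HM M (Rle_refl M)). rewrite Hnull in HM. lra.
Qed.

Lemma psi_pos x : 0 < psi x.
Proof.
  destruct (psi_range x) as [[Hpos | Hzero] _]; [assumption | exfalso].
  set (M := Rabs c + r * (1 + b)).
  assert (HM0 : 0 <= M) by (unfold M; pose proof (Rabs_pos c); nra).
  assert (Hnull : forall y, psi y = 0).
  { apply (strong_minimum_principle psi psi1 psi2 (M / d) x); auto.
    - apply Rmult_le_pos; [lra | left; apply Rinv_0_lt_compat; lra].
    - intro y. replace (M / d * (Rabs (psi y) + Rabs (psi1 y)))
        with (M * (Rabs (psi y) + Rabs (psi1 y)) / d) by (field; lra).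
      apply Rabs_le_div_pos; [assumption |].
      replace (d * psi2 y) with ((- r * (1 - psi y - b * phi y)) * psi y + (- c) * psi1 y)
        by (pose proof (psi_eq y); lra).
      apply Rabs_lin_comb2_le; unfold M.
      + apply Rabs_le. destruct (phi_range y), (psi_range y). pose proof (Rabs_pos c).
        assert (0 <= r * psi y <= r) by (split; nra).
        assert (0 <= r * b * phi y <= r * b).
        { assert (0 < r * b) by nra. split; [apply Rmult_le_pos |]; nra. }
        split; nra.
      + rewrite Rabs_Ropp. nra.
    - intro y. apply psi_range. }
  destruct (lim_pinf_gt psi 1 0 psi_pinf) as [N HN]; [lra |].
  specialize (HN N (Rle_refl N)). rewrite Hnull in HN. lra.
Qed.

Lemma psi_lt_1 x : psi x < 1.
Proof.
  destruct (psi_range x) as [_ [Hlt | Hone]]; [assumption | exfalso].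
  destruct (local_max_second_order psi psi1 (psi2 x) x (x - 1) (x + 1))
    as [Hcrit Hconc]; auto; [lra | intros y _; rewrite Hone; apply psi_range |].
  pose proof (psi_eq x) as Heq. rewrite Hone, Hcrit in Heq.
  assert (0 < r * b * phi x) by (pose proof (phi_pos x); repeat apply Rmult_lt_0_compat; lra).
  nra.
Qed.

Lemma phi_gap_equation t x :
  shift_gap phi2 t x =
    (phi x + phi (x + t) - 1 + a * psi (x + t)) * shift_gap phi t x
    + (- c) * shift_gap phi1 t x + a * phi x * shift_gap psi t x.
Proof. unfold shift_gap. pose proof (phi_eq x). pose proof (phi_eq (x + t)). lra. Qed.

Lemma psi_gap_equation t x :
  d * shift_gap psi2 t x =
    r * b * psi x * shift_gap phi t x
    + r * (psi x + psi (x + t) - 1 + b * phi (x + t)) * shift_gap psi t x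
    + (- c) * shift_gap psi1 t x.
Proof. unfold shift_gap. pose proof (psi_eq x). pose proof (psi_eq (x + t)). lra. Qed.

Definition ordered t x := phi (x + t) <= phi x /\ psi x <= psi (x + t).

Lemma touching_gaps_flat t x0 :
  (forall x, ordered t x) -> phi (x0 + t) = phi x0 \/ psi x0 = psi (x0 + t) ->
  shift_gap phi t x0 = 0 /\ shift_gap phi1 t x0 = 0 /\
  shift_gap psi t x0 = 0 /\ shift_gap psi1 t x0 = 0.
Proof.
  intros Hord Htouch.
  assert (Hphi : forall x, shift_gap phi t x <= 0)
    by (intro x; destruct (Hord x); unfold shift_gap; lra).
  assert (Hpsi : forall x, 0 <= shift_gap psi t x)
    by (intro x; destruct (Hord x); unfold shift_gap; lra).
  assert (Hmax : shift_gap phi t x0 = 0 ->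
      shift_gap phi1 t x0 = 0 /\ shift_gap phi2 t x0 <= 0).
  { intro Hz.
    apply (local_max_second_order (shift_gap phi t) (shift_gap phi1 t) _ x0 (x0 - 1) (x0 + 1));
      try apply shift_gap_derivable; auto; [lra |].
    intros x _. rewrite Hz. apply Hphi. }
  assert (Hmin : shift_gap psi t x0 = 0 ->
      shift_gap psi1 t x0 = 0 /\ 0 <= shift_gap psi2 t x0).
  { intro Hz.
    apply (local_min_second_order (shift_gap psi t) (shift_gap psi1 t) _ x0 (x0 - 1) (x0 + 1));
      try apply shift_gap_derivable; auto; [lra |].
    intros x _. rewrite Hz. apply Hpsi. }
  (* At a touching point the coupling term has a sign that forces the other gap to vanish too. *)
  destruct Htouch as [Hz | Hz].
  - assert (Hz1 : shift_gap phi t x0 = 0) by (unfold shift_gap; lra).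
    destruct (Hmax Hz1) as [Hcrit Hconc].
    rewrite phi_gap_equation, Hz1, Hcrit in Hconc.
    assert (0 < a * phi x0) by (apply Rmult_lt_0_compat; [lra | apply phi_pos]).
    specialize (Hpsi x0).
    assert (Hz2 : shift_gap psi t x0 = 0) by nra.
    destruct (Hmin Hz2). auto.
  - assert (Hz2 : shift_gap psi t x0 = 0) by (unfold shift_gap; lra).
    destruct (Hmin Hz2) as [Hcrit Hconc].
    assert (Hd : 0 <= d * shift_gap psi2 t x0) by (apply Rmult_le_pos; lra).
    rewrite psi_gap_equation, Hz2, Hcrit in Hd.
    assert (0 < r * b * psi x0)
      by (repeat apply Rmult_lt_0_compat; try lra; apply psi_pos).
    specialize (Hphi x0).
    assert (Hz1 : shift_gap phi t x0 = 0) by nra.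
    destruct (Hmax Hz1). auto.
Qed.

Lemma gap_system_bounds t x :
  let S := Rabs (shift_gap phi t x) + Rabs (shift_gap phi1 t x)
           + Rabs (shift_gap psi t x) + Rabs (shift_gap psi1 t x) in
  let M := Rabs c + 2 + r * (2 + b) in
  Rabs (shift_gap phi2 t x) <= M * S /\ Rabs (shift_gap psi2 t x) <= M / d * S.
Proof.
  intros S M.
  destruct (phi_range x), (phi_range (x + t)), (psi_range x), (psi_range (x + t)).
  pose proof (Rabs_pos c).
  assert (Hc : Rabs (- c) <= M) by (rewrite Rabs_Ropp; unfold M; nra).
  assert (Hzero : Rabs 0 <= M) by (rewrite Rabs_R0; unfold M; nra).
  split.
  - rewrite phi_gap_equation.
    replace (_ + _ + _) with
      ((phi x + phi (x + t) - 1 + a * psi (x + t)) * shift_gap phi t x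
       + (- c) * shift_gap phi1 t x + a * phi x * shift_gap psi t x
       + 0 * shift_gap psi1 t x) by ring.
    apply Rabs_lin_comb4_le; auto; apply Rabs_le; unfold M; split; nra.
  - replace (M / d * S) with (M * S / d) by (field; lra).
    apply Rabs_le_div_pos; [assumption |].
    rewrite psi_gap_equation.
    replace (_ + _ + _) with
      (r * b * psi x * shift_gap phi t x + 0 * shift_gap phi1 t x
       + r * (psi x + psi (x + t) - 1 + b * phi (x + t)) * shift_gap psi t x
       + (- c) * shift_gap psi1 t x) by ring.
    assert (0 <= r * b * psi x <= r * b).
    { assert (0 < r * b) by nra. split; [apply Rmult_le_pos |]; nra. }
    assert (0 <= r * (b * phi (x + t)) <= r * b).
    { split; [apply Rmult_le_pos |]; nra. }
    apply Rabs_lin_comb4_le; auto; apply Rabs_le; unfold M; split; nra.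
Qed.

Lemma ordered_touch_impossible t x0 :
  0 < t -> (forall x, ordered t x) ->
  phi (x0 + t) = phi x0 \/ psi x0 = psi (x0 + t) -> False.
Proof.
  intros Ht Hord Htouch.
  destruct (touching_gaps_flat t x0 Hord Htouch) as (e1 & e1' & e2 & e2').
  set (M := Rabs c + 2 + r * (2 + b)).
  assert (HM : 0 <= M) by (unfold M; pose proof (Rabs_pos c); nra).
  assert (Hper : forall x, shift_gap phi t x = 0).
  { intro x. refine (proj1 (linear_system_zero _ _ _ _ _ _ M (M / d) x0 HM _
      (shift_gap_derivable _ _ t phi_d1) (shift_gap_derivable _ _ t phi_d2)
      (shift_gap_derivable _ _ t psi_d1) (shift_gap_derivable _ _ t psi_d2)
      (fun y => proj1 (gap_system_bounds t y)) (fun y => proj2 (gap_system_bounds t y))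
      e1 e1' e2 e2' x)).
    apply Rmult_le_pos; [lra | left; apply Rinv_0_lt_compat; lra]. }
  apply (not_periodic phi t Ht); auto.
  intro x. specialize (Hper x). unfold shift_gap in Hper. lra.
Qed.

Lemma phi_no_valley X p x y :
  (forall z, X <= z -> phi z < 1 - a) ->
  X <= p -> p < x < y -> phi x < phi p -> phi x < phi y -> False.
Proof.
  intros Hsmall Hp Hxy Hlp Hly.
  destruct (interior_min_point phi phi1 phi2 p x y phi_d1 phi_d2 Hxy Hlp Hly)
    as [m [Hm [_ [Hcrit Hconc]]]].
  pose proof (phi_eq m) as Heq. rewrite Hcrit in Heq.
  pose proof (phi_pos m). pose proof (Hsmall m ltac:(lra)). destruct (psi_range m).
  assert (0 < phi m * (1 - phi m - a * psi m)) by (apply Rmult_lt_0_compat; nra).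
  lra.
Qed.

Lemma phi_eventually_nonincreasing :
  exists q, forall x y, q <= x -> x <= y -> phi y <= phi x.
Proof.
  destruct (lim_pinf_lt phi 0 (1 - a) phi_pinf) as [X HX]; [lra |].
  destruct (lim_pinf_lt phi 0 (phi X) phi_pinf) as [M HM]; [apply phi_pos |].
  set (q := Rmax M (X + 1)).
  assert (Hq : M <= q /\ X + 1 <= q) by (split; [apply Rmax_l | apply Rmax_r]).
  exists q. intros x y Hx Hxy.
  destruct (Rle_or_lt (phi y) (phi x)) as [| Hlt]; [assumption | exfalso].
  destruct Hxy as [Hxy | <-]; [| lra].
  pose proof (HM q ltac:(lra)).
  destruct (Rlt_or_le (phi x) (phi X)).
  - apply (phi_no_valley X X x y); auto; lra.
  - assert (q < x) by (destruct Hx as [| <-]; [assumption | lra]).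
    apply (phi_no_valley X X q x); auto; lra.
Qed.

Lemma psi_no_peak X p x y :
  (forall z, z <= X -> 1 < b * phi z) ->
  y <= X -> p < x < y -> psi p < psi x -> psi y < psi x -> False.
Proof.
  intros Hlarge Hy Hxy Hlp Hly.
  destruct (interior_max_point psi psi1 psi2 p x y psi_d1 psi_d2 Hxy Hlp Hly)
    as [m [Hm [_ [Hcrit Hconc]]]].
  pose proof (psi_eq m) as Heq. rewrite Hcrit in Heq.
  pose proof (psi_pos m). pose proof (Hlarge m ltac:(lra)). destruct (psi_range m).
  assert (r * psi m * (1 - psi m - b * phi m) < 0).
  { assert (0 < r * psi m) by (apply Rmult_lt_0_compat; lra). nra. }
  nra.
Qed.

Lemma psi_eventually_nondecreasing_left :
  exists X, forall x y, x <= y -> y <= X -> psi x <= psi y.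
Proof.
  destruct (lim_minf_gt phi 1 (1 / b) phi_minf) as [X HX].
  { apply (Rmult_lt_reg_l b); [lra |]. field_simplify; lra. }
  assert (Hlarge : forall z, z <= X -> 1 < b * phi z).
  { intros z Hz. specialize (HX z Hz).
    replace 1 with (b * (1 / b)) by (field; lra). apply Rmult_lt_compat_l; lra. }
  exists X. intros x y Hxy Hy.
  destruct (Rle_or_lt (psi x) (psi y)) as [| Hlt]; [assumption | exfalso].
  destruct Hxy as [Hxy | <-]; [| lra].
  destruct (lim_minf_lt psi 0 (psi y) psi_minf) as [M HM]; [apply psi_pos |].
  set (p := Rmin M (x - 1)).
  assert (Hp : p <= M /\ p <= x - 1) by (split; [apply Rmin_l | apply Rmin_r]).
  pose proof (HM p ltac:(lra)).
  apply (psi_no_peak X p x y Hlarge); auto; lra.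
Qed.

Lemma monotone_tails : exists N' N, N' < N /\
  (forall x, x <= N' -> 1 / 2 < phi x) /\
  (forall x y, x <= N' -> x <= y -> psi x <= psi y) /\
  (forall x, N <= x -> 1 / 2 < psi x) /\
  (forall x y, N <= x -> x <= y -> phi y <= phi x).
Proof.
  destruct phi_eventually_nonincreasing as [q Hq].
  destruct psi_eventually_nondecreasing_left as [X' HX'].
  destruct (lim_minf_gt phi 1 (1 / 2) phi_minf) as [X1 HX1]; [lra |].
  destruct (lim_pinf_gt psi 1 (1 / 2) psi_pinf) as [X2 HX2]; [lra |].
  (* psi stays above some del > 0 on [X', +oo), and below it near -oo. *)
  destruct (positive_min_on_segment psi X' (Rmax X' X2)) as [e [He Hmin]].
  { apply Rmax_l. }
  { intros y _. exact (derivable_pt_lim_continuity_pt psi y _ (psi_d1 y)). }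
  { intros y _. apply psi_pos. }
  set (del := Rmin e (1 / 2)).
  assert (Hdel : 0 < del) by (apply Rmin_glb_lt; lra).
  assert (Habove : forall y, X' <= y -> del <= psi y).
  { intros y Hy. pose proof (Rmin_l e (1 / 2)). pose proof (Rmin_r e (1 / 2)).
    destruct (Rle_or_lt y (Rmax X' X2)).
    - pose proof (Hmin y ltac:(lra)). unfold del; lra.
    - pose proof (Rmax_r X' X2). pose proof (HX2 y ltac:(lra)). unfold del; lra. }
  destruct (lim_minf_lt psi 0 del psi_minf) as [M' HM']; [assumption |].
  set (N := Rmax q X2).
  set (N' := Rmin (Rmin M' X') (Rmin X1 (N - 1))).
  assert (HN : q <= N /\ X2 <= N) by (split; [apply Rmax_l | apply Rmax_r]).
  assert (HN' : N' <= M' /\ N' <= X' /\ N' <= X1 /\ N' <= N - 1).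
  { unfold N'. pose proof (Rmin_l (Rmin M' X') (Rmin X1 (N - 1))).
    pose proof (Rmin_r (Rmin M' X') (Rmin X1 (N - 1))).
    pose proof (Rmin_l M' X'). pose proof (Rmin_r M' X').
    pose proof (Rmin_l X1 (N - 1)). pose proof (Rmin_r X1 (N - 1)). lra. }
  exists N', N. repeat split.
  - lra.
  - intros x Hx. apply HX1. lra.
  - intros x y Hx Hxy. destruct (Rle_or_lt y X').
    + apply HX'; assumption.
    + pose proof (HM' x ltac:(lra)). pose proof (Habove y ltac:(lra)). lra.
  - intros x Hx. apply HX2. lra.
  - intros x y Hx Hxy. apply Hq; lra.
Qed.

Section Sliding.

Variables N' N : R.
Hypothesis N'_lt_N : N' < N.
Hypothesis phi_left_large : forall x, x <= N' -> 1 / 2 < phi x.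
Hypothesis psi_left_mono : forall x y, x <= N' -> x <= y -> psi x <= psi y.
Hypothesis psi_right_large : forall x, N <= x -> 1 / 2 < psi x.
Hypothesis phi_right_mono : forall x y, N <= x -> x <= y -> phi y <= phi x.

Lemma ordered_left_tail t :
  0 <= t -> phi (N' + t) <= phi N' -> forall x, x <= N' -> phi (x + t) <= phi x.
Proof.
  intros Ht HN' x1 Hx1.
  destruct (Rle_or_lt (phi (x1 + t)) (phi x1)) as [| Hlt]; [assumption | exfalso].
  destruct (lim_minf_gt phi 1 (1 - shift_gap phi t x1) phi_minf) as [M HM].
  { unfold shift_gap; lra. }
  set (B := Rmin M (x1 - 1)).
  assert (HB : B <= M /\ B <= x1 - 1) by (split; [apply Rmin_l | apply Rmin_r]).
  assert (HwB : shift_gap phi t B < shift_gap phi t x1).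
  { pose proof (HM B ltac:(lra)). pose proof (phi_range (B + t)).
    unfold shift_gap in *. lra. }
  assert (HwN' : shift_gap phi t N' < shift_gap phi t x1) by (unfold shift_gap; lra).
  assert (Hx1N' : x1 < N') by (destruct Hx1 as [| ->]; [assumption | lra]).
  destruct (interior_max_point (shift_gap phi t) (shift_gap phi1 t) (shift_gap phi2 t)
    B x1 N' (shift_gap_derivable _ _ t phi_d1) (shift_gap_derivable _ _ t phi_d2)
    ltac:(lra) HwB HwN') as [x0 [Hx0 [Hle [Hcrit Hconc]]]].
  unfold shift_gap in *.
  assert (Hsame : phi1 (x0 + t) = phi1 x0) by lra.
  pose proof (phi_eq x0). pose proof (phi_eq (x0 + t)) as Heq. rewrite Hsame in Heq.
  pose proof (phi_left_large x0 ltac:(lra)). pose proof (phi_range (x0 + t)).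
  pose proof (psi_range x0). pose proof (psi_left_mono x0 (x0 + t) ltac:(lra) ltac:(lra)).
  pose proof (logistic_difference_pos (phi x0) (phi (x0 + t)) a (psi (x0 + t)) (psi x0)
    ltac:(lra) ltac:(lra) ltac:(lra) ltac:(lra) ltac:(lra)).
  lra.
Qed.

Lemma ordered_right_tail t :
  0 <= t -> psi N <= psi (N + t) -> forall x, N <= x -> psi x <= psi (x + t).
Proof.
  intros Ht HN x1 Hx1.
  destruct (Rle_or_lt (psi x1) (psi (x1 + t))) as [| Hlt]; [assumption | exfalso].
  destruct (lim_pinf_gt psi 1 (1 + shift_gap psi t x1) psi_pinf) as [M HM].
  { unfold shift_gap; lra. }
  set (B := Rmax M (x1 + 1)).
  assert (HB : M <= B /\ x1 + 1 <= B) by (split; [apply Rmax_l | apply Rmax_r]).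
  assert (HwB : shift_gap psi t x1 < shift_gap psi t B).
  { pose proof (HM (B + t) ltac:(lra)). pose proof (psi_range B).
    unfold shift_gap in *. lra. }
  assert (HwN : shift_gap psi t x1 < shift_gap psi t N) by (unfold shift_gap; lra).
  assert (HNx1 : N < x1) by (destruct Hx1 as [| <-]; [assumption | lra]).
  destruct (interior_min_point (shift_gap psi t) (shift_gap psi1 t) (shift_gap psi2 t)
    N x1 B (shift_gap_derivable _ _ t psi_d1) (shift_gap_derivable _ _ t psi_d2)
    ltac:(lra) HwN HwB) as [x0 [Hx0 [Hle [Hcrit Hconc]]]].
  unfold shift_gap in *.
  assert (0 <= d * (psi2 (x0 + t) - psi2 x0)) by (apply Rmult_le_pos; lra).
  assert (Hsame : psi1 (x0 + t) = psi1 x0) by lra.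
  pose proof (psi_eq x0). pose proof (psi_eq (x0 + t)) as Heq. rewrite Hsame in Heq.
  pose proof (psi_right_large (x0 + t) ltac:(lra)). pose proof (psi_range x0).
  pose proof (phi_range (x0 + t)). pose proof (phi_right_mono x0 (x0 + t) ltac:(lra) ltac:(lra)).
  pose proof (Rmult_lt_0_compat r _ r_pos
    (logistic_difference_pos (psi (x0 + t)) (psi x0) b (phi x0) (phi (x0 + t))
       ltac:(lra) ltac:(lra) ltac:(lra) ltac:(lra) ltac:(lra))).
  lra.
Qed.

Lemma ordered_of_window t :
  0 <= t -> (forall x, N' <= x <= N -> ordered t x) -> forall x, ordered t x.
Proof.
  intros Ht Hwin x.
  destruct (Rle_or_lt N x) as [HNx | HxN]; [| destruct (Rle_or_lt x N') as [HxN' | HN'x]].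
  - split; [apply phi_right_mono; lra |].
    apply ordered_right_tail; [assumption | apply (Hwin N) | assumption]; lra.
  - split; [| apply psi_left_mono; lra].
    apply ordered_left_tail; [assumption | apply (Hwin N') | assumption]; lra.
  - apply Hwin. lra.
Qed.

Lemma ordered_large_shift : exists T, forall t, T <= t -> forall x, ordered t x.
Proof.
  destruct (positive_min_on_segment phi N' N) as [e1 [He1 Hphi]]; [lra | | |].
  { intros y _. exact (derivable_pt_lim_continuity_pt _ y _ (phi_d1 y)). }
  { intros y _. apply phi_pos. }
  destruct (positive_min_on_segment (fun y => 1 - psi y) N' N) as [e2 [He2 Hpsi]];
    [lra | | |].
  { intros y _. apply (continuity_pt_minus (fct_cte 1) psi).
    - apply continuity_pt_const. intros u v. reflexivity.
    - exact (derivable_pt_lim_continuity_pt _ y _ (psi_d1 y)). }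
  { intros y _. pose proof (psi_lt_1 y). lra. }
  destruct (lim_pinf_lt phi 0 e1 phi_pinf He1) as [M1 HM1].
  destruct (lim_pinf_gt psi 1 (1 - e2) psi_pinf) as [M2 HM2]; [lra |].
  set (T := Rmax 0 (Rmax M1 M2 - N')).
  exists T. intros t Ht.
  assert (HT : 0 <= T /\ Rmax M1 M2 - N' <= T) by (split; [apply Rmax_l | apply Rmax_r]).
  pose proof (Rmax_l M1 M2). pose proof (Rmax_r M1 M2).
  apply ordered_of_window; [lra |]. intros x Hx.
  pose proof (HM1 (x + t) ltac:(lra)). pose proof (HM2 (x + t) ltac:(lra)).
  pose proof (Hphi x Hx). pose proof (Hpsi x Hx). simpl in *.
  split; lra.
Qed.

Lemma ordered_shrink t0 :
  0 < t0 -> (forall x, phi (x + t0) < phi x /\ psi x < psi (x + t0)) ->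
  exists eps, 0 < eps /\ forall s, t0 - eps <= s <= t0 -> forall x, ordered s x.
Proof.
  intros Ht0 Hstrict.
  assert (Hcont : forall f f1, (forall y, derivable_pt_lim f y (f1 y)) ->
      forall y, continuity_pt (shift_gap f t0) y).
  { intros f f1 Hf y.
    exact (derivable_pt_lim_continuity_pt _ y _ (shift_gap_derivable f f1 t0 Hf y)). }
  destruct (positive_min_on_segment (fun y => - shift_gap phi t0 y) N' N)
    as [e1 [He1 Hgap1]]; [lra | | |].
  { intros y _. apply continuity_pt_opp, (Hcont phi phi1 phi_d1). }
  { intros y _. destruct (Hstrict y). unfold shift_gap. lra. }
  destruct (positive_min_on_segment (shift_gap psi t0) N' N) as [e2 [He2 Hgap2]];
    [lra | intros y _; apply (Hcont psi psi1 psi_d1) | |].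
  { intros y _. destruct (Hstrict y). unfold shift_gap. lra. }
  assert (Hc1 : forall y, continuity_pt phi1 y)
    by (intro y; exact (derivable_pt_lim_continuity_pt _ y _ (phi_d2 y))).
  assert (Hc2 : forall y, continuity_pt psi1 y)
    by (intro y; exact (derivable_pt_lim_continuity_pt _ y _ (psi_d2 y))).
  destruct (lipschitz_on_segment phi phi1 N' (N + t0) phi_d1 Hc1) as [L1 [HL1 Hlip1]]; [lra |].
  destruct (lipschitz_on_segment psi psi1 N' (N + t0) psi_d1 Hc2) as [L2 [HL2 Hlip2]]; [lra |].
  destruct (small_positive_step t0 L1 L2 e1 e2) as (eps & Heps & Heps0 & Heps1 & Heps2); auto.
  exists eps. split; [assumption |]. intros s Hs.
  apply ordered_of_window; [lra |]. intros x Hx.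
  pose proof (Rabs_le_inv _ _ (Hlip1 (x + s) (x + t0) ltac:(lra) ltac:(lra) ltac:(lra))).
  pose proof (Rabs_le_inv _ _ (Hlip2 (x + s) (x + t0) ltac:(lra) ltac:(lra) ltac:(lra))).
  pose proof (Hgap1 x Hx). pose proof (Hgap2 x Hx). unfold shift_gap in *.
  assert (L1 * (t0 - s) <= L1 * eps) by (apply Rmult_le_compat_l; lra).
  assert (L2 * (t0 - s) <= L2 * eps) by (apply Rmult_le_compat_l; lra).
  replace (x + t0 - (x + s)) with (t0 - s) in * by ring.
  split; lra.
Qed.

End Sliding.

Lemma ordered_limit t0 :
  (forall s, t0 < s -> forall x, ordered s x) -> forall x, ordered t0 x.
Proof.
  intros Hright x. split.
  - apply right_limit_le; [exact (derivable_pt_lim_continuity_pt _ _ _ (phi_d1 _)) |].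
    intros y Hy. destruct (Hright (y - x) ltac:(lra) x) as [Hphi _].
    now replace (x + (y - x)) with y in Hphi by ring.
  - apply right_limit_ge; [exact (derivable_pt_lim_continuity_pt _ _ _ (psi_d1 _)) |].
    intros y Hy. destruct (Hright (y - x) ltac:(lra) x) as [_ Hpsi].
    now replace (x + (y - x)) with y in Hpsi by ring.
Qed.

Lemma ordered_strictly t x :
  0 < t -> (forall y, ordered t y) -> phi (x + t) < phi x /\ psi x < psi (x + t).
Proof.
  intros Ht Hord. destruct (Hord x) as [Hphi Hpsi].
  split; [destruct Hphi as [| Heq] | destruct Hpsi as [| Heq]]; try assumption;
    exfalso; apply (ordered_touch_impossible t x Ht Hord); auto.
Qed.

Lemma ordered_all t : 0 < t -> forall x, ordered t x.
Proof.
  destruct monotone_tails as (N' & N & HNN & Hphi' & Hpsi' & Hpsi & Hphi).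
  destruct (ordered_large_shift N' N) as [T HT]; try assumption.
  apply (downward_induction (fun t => forall x, ordered t x) T HT).
  intros t0 Ht0 Hright.
  pose proof (ordered_limit t0 Hright) as Hord.
  destruct (ordered_shrink N' N) with (t0 := t0) as [eps [Heps Hshrink]]; try assumption.
  { intro x. exact (ordered_strictly t0 x Ht0 Hord). }
  exists eps. split; [assumption |]. intros s Hs.
  destruct (Rle_or_lt s t0); [apply Hshrink; lra | now apply Hright].
Qed.

Lemma strictly_monotone x1 x2 : x1 < x2 -> phi x2 < phi x1 /\ psi x1 < psi x2.
Proof.
  intro Hx. replace x2 with (x1 + (x2 - x1)) by ring.
  apply ordered_strictly; [lra | apply ordered_all; lra].
Qed.

End TravelingWave.

Theorem propositionA4 (c d r a b : R) (phi psi : R -> R) :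
  in_E c d r a b ->
  tw_profile c d r a b phi psi ->
  forall x1 x2, x1 < x2 -> phi x2 < phi x1 /\ psi x1 < psi x2.
Proof.
  intros [[Hd [Hr [Ha Hb]]] _]
    [Hrange [phi1 [phi2 [psi1 [psi2 [[Dphi1 [Dphi2 _]] [[Dpsi1 [Dpsi2 _]]
      [Hphi_eq [Hpsi_eq [Hphi_minf [Hpsi_minf [Hphi_pinf Hpsi_pinf]]]]]]]]]]]].
  apply (strictly_monotone c d r a b phi phi1 phi2 psi psi1 psi2); try assumption; try lra.
  - intro x. apply Hrange.
  - intro x. apply Hrange.
Qed.
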